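(* The one-to-many reduction from multi-valued model checking of mv-ATL* to 2-valued model checking of ATL* runs in linear time with respect to the size of the model and the number of truth values.
   Context: Let $\mathcal{L}=(L,\leq)$ be a finite distributive lattice with meet $\sqcap$, join $\sqcup$, least element $\bot$ and greatest element $\top$; for a family of elements, $\inf$ denotes its greatest lower bound (lattice meet) and $\bigsqcup$ its least upper bound (lattice join). Given a countable set $\mathcal{C}$ of constant symbols, an interpreted lattice is $\mathcal{L}^+=(L,\leq,\sigma)$ with $\sigma:\mathcal{C}\to L$. A multi-valued concurrent game structure (mv-CGS) over $\mathcal{L}^+$ is $M=\langle \mathrm{Agt},Q,Act,d,t,AP,V,\mathcal{L}^+\rangle$ where $\mathrm{Agt},Q,Act,AP$ are nonempty finite sets of agents, states, actions and atomic propositions, $d:\mathrm{Agt}\times Q\to 2^{Act}\setminus\{\emptyset\}$ gives the available actions, $t$ is a deterministic transition function assigning a successor $t(q,\alpha_1,\dots,\alpha_k)$ to each state and tuple of available actions, and $V:AP\times Q\to L$ is a multi-valued valuation. Paths, (perfect recall) strategies $s_a:Q^+\to Act$, collective strategies $s_A\in\Sigma_A$ and outcome sets $out(q,s_A)$ are as in standard ATL*. Formulas of mv-ATL*: state formulas $\varphi::=c\mid p\mid\varphi\wedge\varphi\mid\varphi\vee\varphi\mid\langle\!\langle A\rangle\!\rangle\gamma\mid[\![A]\!]\gamma$, path formulas $\gamma::=\varphi\mid\gamma\wedge\gamma\mid\gamma\vee\gamma\mid X\gamma\mid\gamma U\gamma\mid\gamma W\gamma$. Semantics: $[\![c]\!]_{M,q}=\sigma(c)$;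 $[\![p]\!]_{M,q}=V(p,q)$; $\wedge,\vee$ by $\sqcap,\sqcup$; $[\![\varphi]\!]_{M,\lambda}=[\![\varphi]\!]_{M,\lambda[0]}$; $[\![X\gamma]\!]_{M,\lambda}=[\![\gamma]\!]_{M,\lambda[1..\infty]}$; $[\![\gamma_1U\gamma_2]\!]_{M,\lambda}=\bigsqcup_{i\ge 0}\inf_{0\le j<i}\{[\![\gamma_2]\!]_{M,\lambda[i..\infty]}\sqcap[\![\gamma_1]\!]_{M,\lambda[j..\infty]}\}$; $[\![\gamma_1W\gamma_2]\!]_{M,\lambda}=\inf_{i\ge0}[\![\gamma_1]\!]_{M,\lambda[i..\infty]}\sqcup[\![\gamma_1U\gamma_2]\!]_{M,\lambda}$; $[\![\langle\!\langle A\rangle\!\rangle\gamma]\!]_{M,q}=\bigsqcup_{s_A\in\Sigma_A}\inf_{\lambda\in out(q,s_A)}[\![\gamma]\!]_{M,\lambda}$; $[\![[\![A]\!]\gamma]\!]_{M,q}=\inf_{s_A\in\Sigma_A}\bigsqcup_{\lambda\in out(q,s_A)}[\![\gamma]\!]_{M,\lambda}$. An element $\ell\neq\bot$ is join-irreducible if $\ell=x\sqcup y$ implies $\ell=x$ or $\ell=y$; $JI(\mathcal{L})$ is the set of such elements, and every $x\neq\bot$ is the join of the join-irreducible elements below it. For $\ell\in JI(\mathcal{L})$ the threshold function $f_\ell:L\to\{\bot,\top\}$ maps $x$ to $\top$ if $x\ge\ell$ and to $\bot$ otherwise (it preserves arbitrary meets and joins), and $M_{f_\ell}$ is the classical 2-valued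 model obtained by applying $f_\ell$ to all values of $V$ and $\sigma$; one has $[\![\varphi]\!]_{M,\xi}\ge\ell$ iff $M_{f_\ell},\xi\models\varphi$. The reduction: for every $\ell\in JI(\mathcal{L})$ classically model-check $\varphi$ in $M_{f_\ell},\xi$, collect the $\ell$ for which the answer is yes, and return their join, which equals $[\![\varphi]\!]_{M,\xi}$. *)

From HB Require Import structures.
From mathcomp Require Import all_boot all_order.
Set Implicit Arguments. Unset Strict Implicit. Unset Printing Implicit Defensive.
Import Order.Theory.
Local Open Scope order_scope.

(* An mv-CGS over a finite distributive lattice L (with bottom/top) and a set
   C of constant symbols.  d, t and V are stored as finite tables (finfuns);
   the transition table is total over all action profiles (entries for
   unavailable actions are irrelevant).  A classical (2-valued) CGS is an
   mv-CGS over the two-element lattice bool. *)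
Record mvCGS (disp : Order.disp_t) (L : finTBDistrLatticeType disp) (C : Type) := MvCGS {
  Agt : finType;
  Q : finType;
  Act : finType;
  AP : finType;
  dact : {ffun Agt * Q -> {set Act}};
  trans : {ffun Q * {ffun Agt -> Act} -> Q};
  V : {ffun AP * Q -> L};
  sigma : C -> L
}.

Definition wf_CGS disp (L : finTBDistrLatticeType disp) C (M : mvCGS L C) : Prop :=
  [/\ 0 < #|Agt M|, 0 < #|Q M|, 0 < #|Act M|, 0 < #|AP M|
    & forall aq, dact M aq != set0].

(* size of the model: number of entries of its tables *)
Definition msize disp (L : finTBDistrLatticeType disp) C (M : mvCGS L C) : nat :=
  #|Agt M| * #|Q M| * #|Act M|
  + #|Q M| * #|Act M| ^ #|Agt M|
  + #|AP M| * #|Q M|.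

Definition join_irreducible disp (L : finTBDistrLatticeType disp) (l : L) : bool :=
  (l != \bot) && [forall x : L, forall y : L, (l == x `|` y) ==> (l == x) || (l == y)].

(* f_l : L -> {bot, top}, rendered with values in bool *)
Definition f_thr disp (L : finTBDistrLatticeType disp) (l x : L) : bool := l <= x.

Definition threshold_model disp (L : finTBDistrLatticeType disp) C (l : L)
    (M : mvCGS L C) : mvCGS bool C :=
  @MvCGS _ bool C (Agt M) (Q M) (Act M) (AP M) (dact M) (trans M)
    [ffun pq => f_thr l (V M pq)] (fun c => f_thr l (sigma M c)).

(* A computation returns a value together with the number of elementary steps
   it performs. *)
Definition costM (A : Type) := (A * nat)%type.
Definition cret A (a : A) : costM A := (a, 0%N).
Definition cbind A B (m : costM A) (f : A -> costM B) : costM B :=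
  ((f m.1).1, (m.2 + (f m.1).2)%N).
Definition cstep A (a : A) : costM A := (a, 1%N).
(* building a table entry by entry: each entry costs its computation plus one
   write *)
Definition tabulate (T : finType) R (f : T -> costM R) : costM {ffun T -> R} :=
  ([ffun x => (f x).1], (\sum_(x : T) ((f x).2 + 1))%N).

(* construction of M_{f_l}: copy d (each set costs |Act|), copy t, and
   threshold every entry of V (one lattice comparison each); the valuation of
   the (countably many) constants is thresholded lazily. *)
Definition thresh_prog disp (L : finTBDistrLatticeType disp) C (l : L)
    (M : mvCGS L C) : costM (mvCGS bool C) :=
  cbind (tabulate (fun aq => (dact M aq, #|Act M|)))     (fun d' =>
  cbind (tabulate (fun qa => cret (trans M qa)))          (fun t' =>
  cbind (tabulate (fun pq => cstep (f_thr l (V M pq))))   (fun V' =>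
  cret (@MvCGS _ bool C (Agt M) (Q M) (Act M) (AP M) d' t' V'
          (fun c => f_thr l (sigma M c)))))).

(* The reduction: for every join-irreducible l (the set JI(L) is taken as
   given with the lattice), build M_{f_l}, call the 2-valued model checker
   [mc] (an oracle, charged one step per call), and join the l's answered
   positively (one step per join). *)
Definition reduction disp (L : finTBDistrLatticeType disp) C (M : mvCGS L C)
    (mc : mvCGS bool C -> bool) : costM L :=
  foldr (fun l acc =>
           cbind (thresh_prog l M) (fun Ml =>
           cbind (cstep (mc Ml))   (fun b =>
           cbind acc               (fun x =>
           cstep (if b then l `|` x else x)))))
        (cret \bot) (enum [pred l : L | join_irreducible l]).

(* Each pass of the reduction builds the threshold model M_{f_l}, which copies
   the tables of M and compares every entry of V with l, so it costs a fixed
   multiple of the size of M; the oracle call and the join add one step each.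
   There is one pass per join-irreducible element, and there are at most |L|
   of them. *)
From mathcomp Require Import all_boot all_order zify.
Import Order.Theory.
Local Open Scope order_scope.

Section ThresholdModel.

Context {disp : Order.disp_t} {L : finTBDistrLatticeType disp} {C : Type}.
Variable M : mvCGS L C.

Lemma thresh_progE (l : L) : (thresh_prog l M).1 = threshold_model l M.
Proof.
rewrite /threshold_model /=.
by congr MvCGS; apply/ffunP => x; rewrite ffunE.
Qed.

Definition thresh_cost : nat :=
  #|Agt M| * #|Q M| * (#|Act M|).+1 + #|Q M| * #|Act M| ^ #|Agt M|
  + 2 * (#|AP M| * #|Q M|).

Lemma thresh_prog_cost (l : L) : (thresh_prog l M).2 = thresh_cost.
Proof.
rewrite /= !sum_nat_const !cardE -!cardT !card_prod card_ffun /thresh_cost; lia.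
Qed.

Lemma thresh_cost_le : (0 < #|Act M|)%N -> (thresh_cost <= 2 * msize M)%N.
Proof. by rewrite /thresh_cost /msize; nia. Qed.

Lemma msize_ge2 : wf_CGS M -> (2 <= msize M)%N.
Proof.
case=> _ hQ hAct hAP _.
have hT : (0 < #|Q M| * #|Act M| ^ #|Agt M|)%N.
  by rewrite muln_gt0 expn_gt0; apply/andP; split; [exact: hQ | apply/orP; left].
by rewrite /msize; nia.
Qed.

End ThresholdModel.

Section Reduction.

Context {disp : Order.disp_t} {L : finTBDistrLatticeType disp} {C : Type}.
Variables (M : mvCGS L C) (mc : mvCGS bool C -> bool).

Definition reduction_seq (s : seq L) : costM L :=
  foldr (fun l acc =>
           cbind (thresh_prog l M) (fun Ml =>
           cbind (cstep (mc Ml))   (fun b =>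
           cbind acc               (fun x =>
           cstep (if b then l `|` x else x)))))
        (cret \bot) s.

Lemma reductionE : reduction M mc = reduction_seq (enum [pred l : L | join_irreducible l]).
Proof. by []. Qed.

Lemma reduction_seq_value (s : seq L) :
  (reduction_seq s).1 = \join_(l <- s | mc (threshold_model l M)) l.
Proof.
elim: s => [|l s IHs]; first by rewrite big_nil.
by rewrite big_cons /= -IHs -[X in mc X]/((thresh_prog l M).1) thresh_progE; case: ifP.
Qed.

Lemma reduction_seq_cost (s : seq L) :
  (reduction_seq s).2 = (size s * (thresh_cost M).+2)%N.
Proof.
elim: s => [|l s IHs] //=.
by rewrite -[X in (X + _)%N]/((thresh_prog l M).2) thresh_prog_cost IHs mulSn; lia.
Qed.

End Reduction.

Theorem theorem5p6 :
  exists c : nat,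
    forall (disp : Order.disp_t) (L : finTBDistrLatticeType disp) (C : Type)
           (M : mvCGS L C) (mc : mvCGS bool C -> bool),
      wf_CGS M ->
      (reduction M mc).1 = \join_(l : L | join_irreducible l && mc (threshold_model l M)) l
      /\ ((reduction M mc).2 <= c * (#|L| * msize M))%N.
Proof.
exists 3%N => disp L C M mc wfM.
rewrite reductionE reduction_seq_value reduction_seq_cost big_enum_cond; split=> //.
have size_JI : (size (enum [pred l : L | join_irreducible l]) <= #|L|)%N.
  by rewrite -cardE max_card.
have pass_cost : ((thresh_cost M).+2 <= 3 * msize M)%N.
  have [_ _ hAct _ _] := wfM.
  by have := thresh_cost_le M hAct; have := msize_ge2 M wfM; lia.
by rewrite mulnCA leq_mul.
Qed.
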